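(* Fix $x,y\in Y_{G,b,P_\delta}$, $(u_x,v_x)\in[Q_x]$, $(u_y,v_y)\in[Q_y]$ and $w\in\Delta P$ (identified with an element of $P$), and write $$s^{-1}(u_xxv_x^{-1})\,s^{-1}(wu_yyv_y^{-1}w^{-1})=\sum_{\substack{z\in Z\\(u'_z,v'_z)\in A_z}}\alpha_z\,s^{-1}(u'_zz(v'_z)^{-1})$$ with $Z\subseteq Y_{G,b,P_\delta}$, $A_z\subseteq P\times P$, $\alpha_z\in k$. Let $W'=Q_{u_x,v_x}\cap Q_{wu_y,wv_y,y}$. Then for all $[f],[g]\in\mathrm{H}^*(W',k)$, $$\theta^*_{u_x,v_x,x}([f])\cup\theta^*_{wu_y,wv_y,y}([g])=\sum_{\substack{z\in Z\\(u'_z,v'_z)\in A_z}}\alpha_z\,\theta^*_{u'_z,v'_z,z}([f]\cup[g]).$$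
   Context: $G$ is a finite group, $k$ an algebraically closed field of characteristic $p$, $b$ a block idempotent of $kG$ with defect pointed group $P_\delta$, $i\in\delta$ a source idempotent; the source algebra $ikGi$ is a $k[P\times P]$-module via $(u,v)\cdot m=umv^{-1}$ and a $k\Delta P$-module by restriction to $\Delta P=\{(w,w)\mid w\in P\}$; cohomology with coefficients in $ikGi$ carries the cup product with respect to the multiplication of $ikGi$. Conjugation: ${}^xa=xax^{-1}$, $a^x=x^{-1}ax$. $Y_{G,b,P_\delta}$ is a subset of a system of representatives of $P\backslash G/P$ with a fixed isomorphism of $k[P\times P]$-modules $s:ikGi\to\bigoplus_{x\in Y_{G,b,P_\delta}}k[PxP]$. $Q_x:=\{(a,a^x)\mid a\in P\cap{}^xP\}$, $Q_{u,v,x}:=\Delta P\cap{}^{(u,v)}Q_x$; $[Q_x]$ is a fixed system of representatives of $\Delta P\backslash(P\times P)/Q_x$ and $Q_{u_x,v_x}:=Q_{u_x,v_x,x}$. $\theta_{u,v,x}:k\to ikGi$, $\alpha\mapsto\alpha s^{-1}(uxv^{-1})$, is a $kW$-module map for subgroups $W$ fixing $s^{-1}(uxv^{-1})$ (in particular for $W\le Q_{u,v,x}$), and $\theta^*_{u,v,x}:\mathrm{H}^*(W,k)\to\mathrm{H}^*(W,ikGi)$ is the induced map. *)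

From HB Require Import structures.
From mathcomp Require Import all_boot all_order all_algebra all_fingroup.
Set Implicit Arguments. Unset Strict Implicit. Unset Printing Implicit Defensive.
Import GRing.Theory.
Local Open Scope ring_scope.

(* The finite group G is modelled as the whole carrier of gT : finGroupType.
   The group algebra kG is modelled as {ffun gT -> k}: a = sum_g a(g) g.    *)
Notation galg gT k := {ffun gT -> k} (only parsing).

Section GroupAlgebra.
Variables (gT : finGroupType) (k : fieldType).

Local Notation galg := {ffun gT -> k} (only parsing).

Definition gmul (a b : galg) : galg :=
  [ffun z => \sum_(x : gT) a x * b (x^-1 * z)%g].

Definition gscale (c : k) (a : galg) : galg := [ffun z => c * a z].

Definition gel (g : gT) : galg := [ffun z => (z == g)%:R].

Definition gconj (g : gT) (a : galg) : galg := gmul (gmul (gel g) a) (gel (g^-1)%g).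

Definition idem (a : galg) := gmul a a = a.
Definition central (a : galg) := forall c, gmul a c = gmul c a.

Definition block_idem (b : galg) :=
  [/\ b != 0, idem b, central b &
      forall e, idem e -> central e -> gmul b e = e -> e = 0 \/ e = b].

Definition fixedby (H : {set gT}) (a : galg) := forall h, h \in H -> gconj h a = a.

Definition in_transfer (H : {group gT}) (a : galg) :=
  exists c, fixedby H c /\
    a = \sum_(X in lcosets H [set: gT]) gconj (repr X) c.

Definition defect_group (b : galg) (P : {group gT}) :=
  in_transfer P b /\ forall Q : {group gT}, Q \proper P -> ~ in_transfer Q b.

Definition prim_idem_fixed (P : {set gT}) (i : galg) :=
  [/\ fixedby P i, i != 0, idem i &
      forall e, fixedby P e -> idem e -> gmul i e = e -> gmul e i = e ->
                e = 0 \/ e = i].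

Definition brauer (P : {set gT}) (a : galg) : galg :=
  [ffun g => if g \in ('C(P))%g then a g else 0].

(* i is a source idempotent of b: P is a defect group, i is a primitive
   idempotent of (kGb)^P whose point delta satisfies Br_P(delta) <> 0,
   i.e. P_delta is a defect pointed group of G_{b} and i \in delta. *)
Definition source_idem (b : galg) (P : {group gT}) (i : galg) :=
  [/\ defect_group b P, prim_idem_fixed P i, gmul i b = i & brauer P i != 0].

Definition srcalg (i : galg) : pred galg := [pred a : galg | gmul (gmul i a) i == a].

Definition dcspan (P Y : {set gT}) : pred galg :=
  [pred a : galg | [forall g, (a g != 0) ==> [exists x in Y, g \in (P :* x * P)%g]]].

Definition dc_distinct (P Y : {set gT}) :=
  {in Y &, forall x y, y \in (P :* x * P)%g -> x = y}.

Definition source_iso (P Y : {set gT}) (i : galg) (s sinv : galg -> galg) :=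
  [/\ forall (c : k) (a a' : galg), s (gscale c a + a') = gscale c (s a) + s a',
      {in srcalg i, forall a, s a \in dcspan P Y},
      {in dcspan P Y, forall a, sinv a \in srcalg i},
      {in srcalg i, cancel s sinv} /\ {in dcspan P Y, cancel sinv s} &
      forall u v a, u \in P -> v \in P -> a \in srcalg i ->
        s (gmul (gmul (gel u) a) (gel (v^-1)%g)) = gmul (gmul (gel u) (s a)) (gel (v^-1)%g)].

(* the relation (a,b) ~ r in  Delta P \ (P x P) / Q_x,
   Q_x = {(c, c^x) | c in P cap xPx^-1}  (c^x = x^-1 c x, MathComp's c ^ x) *)
Definition dcrel (P : {set gT}) (x : gT) (ab r : gT * gT) :=
  exists2 w, w \in P & exists2 c, c \in (P :&: (P :^ x^-1))%g &
    ab = ((w * r.1 * c)%g, (w * r.2 * (c ^ x))%g).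

Definition dc_reps (P : {set gT}) (x : gT) (R : {set gT * gT}) :=
  R \subset setX P P /\
  forall a b, a \in P -> b \in P ->
    exists! r, r \in R /\ dcrel P x (a, b) r.

(* Q_{u,v,x} = Delta P cap ^{(u,v)} Q_x, identified with a subgroup of P *)
Definition Quvx (P : {set gT}) (u v x : gT) : {set gT} :=
  [set w in P | [exists c in (P :&: (P :^ x^-1))%g,
     (w == u * c * u^-1)%g && (w == v * (c ^ x) * v^-1)%g]].

Section Cohomology.
Variables (M : zmodType) (act : gT -> M -> M).

(* an n-cochain is a function on sequences of length n of elements of W *)
Definition sgnz (b : bool) (m : M) := if b then - m else m.

Definition merge_at (i : nat) (s : seq gT) : seq gT :=
  take i s ++ (nth 1%g s i * nth 1%g s i.+1)%g :: drop i.+2 s.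

Definition cobound (n : nat) (f : seq gT -> M) : seq gT -> M :=
  fun s => act (nth 1%g s 0) (f (behead s))
           + \sum_(j < n) sgnz (odd j.+1) (f (merge_at j s))
           + sgnz (odd n.+1) (f (take n s)).

Definition inW (W : {set gT}) (n : nat) (s : seq gT) :=
  size s = n /\ all (fun g => g \in W) s.

Definition cocycle (W : {set gT}) (n : nat) (f : seq gT -> M) :=
  forall s, inW W n.+1 s -> cobound n f s = 0.

Definition cohomologous (Msub : pred M) (W : {set gT}) (n : nat)
    (f g : seq gT -> M) :=
  match n with
  | 0 => forall s, inW W 0 s -> f s = g s
  | n'.+1 => exists2 h : seq gT -> M, (forall s, h s \in Msub) &
               forall s, inW W n s -> f s - g s = cobound n' h s
  end.
End Cohomology.

Definition triv_act (g : gT) (a : k) := a.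
Definition conj_act (g : gT) (a : galg) := gconj g a.

Definition cupk (m : nat) (f g : seq gT -> k) : seq gT -> k :=
  fun s => f (take m s) * g (drop m s).
Definition cupA (m : nat) (f g : seq gT -> galg) : seq gT -> galg :=
  fun s => gmul (f (take m s)) (gconj (\prod_(h <- take m s) h)%g (g (drop m s))).

Definition theta_star (sinv : galg -> galg) (u v x : gT) (f : seq gT -> k)
    : seq gT -> galg :=
  fun s => gscale (f s) (sinv (gel (u * x * v^-1)%g)).

End GroupAlgebra.

Arguments gel {gT k} g.

From HB Require Import structures.
From mathcomp Require Import all_boot all_order all_algebra all_fingroup.

Set Implicit Arguments.
Unset Strict Implicit.
Unset Printing Implicit Defensive.

Import GRing.Theory.
Local Open Scope ring_scope.

(* The two cochains agree on the nose, not merely up to a coboundary.  An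
   element h of W' lies in Q_{wu_y,wv_y,y}, so conjugation by h fixes the group
   element (wu_y) y (wv_y)^-1; as s is a P x P-module isomorphism, h also fixes
   s^-1((wu_y) y (wv_y)^-1).  Hence the twist by the product of the first m
   arguments in the cup product on ikGi disappears, and the cup product of the
   two theta-cochains is (f cup g) times the product s^-1(..) s^-1(..), which is
   expanded by the given decomposition.  Neither the cocycle conditions nor
   the block-theoretic hypotheses enter this computation. *)

Section GroupAlgebra.
Variables (gT : finGroupType) (k : fieldType).
Implicit Types (a c : {ffun gT -> k}) (g h : gT).

Lemma gscaleA (d d' : k) a : gscale d (gscale d' a) = gscale (d * d') a.
Proof. by apply/ffunP=> z; rewrite !ffunE mulrA. Qed.

Lemma gscale_sumr (I : Type) (r : seq I) (Q : pred I) (F : I -> {ffun gT -> k})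
    (d : k) :
  gscale d (\sum_(j <- r | Q j) F j) = \sum_(j <- r | Q j) gscale d (F j).
Proof.
apply/ffunP=> z; rewrite ffunE !sum_ffunE mulr_sumr.
by apply: eq_bigr => j _; rewrite ffunE.
Qed.

Lemma gmul_gel_l g a : gmul (gel g) a = [ffun z => a (g^-1 * z)%g].
Proof.
apply/ffunP=> z; rewrite !ffunE (bigD1 g) //= big1 ?addr0 ?ffunE ?eqxx ?mul1r //.
by move=> h /negbTE hg; rewrite ffunE hg mul0r.
Qed.

Lemma gmul_gel_r g a : gmul a (gel g) = [ffun z => a (z * g^-1)%g].
Proof.
apply/ffunP=> z; rewrite !ffunE (bigD1 (z * g^-1)%g) //= big1 ?addr0 ?ffunE.
  by rewrite invMg invgK mulgKV eqxx mulr1.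
move=> h hne; rewrite ffunE; case: eqP => [E|]; last by rewrite mulr0.
by case/eqP: hne; rewrite -E invMg invgK mulgA mulgV mul1g.
Qed.

Lemma gconjE g a : gconj g a = [ffun z => a (g^-1 * z * g)%g].
Proof.
rewrite /gconj gmul_gel_r gmul_gel_l; apply/ffunP=> z.
by rewrite !ffunE invgK mulgA.
Qed.

Lemma gconj1 a : gconj 1 a = a.
Proof. by apply/ffunP=> z; rewrite gconjE !ffunE invg1 mul1g mulg1. Qed.

Lemma gconjM g h a : gconj (g * h) a = gconj g (gconj h a).
Proof. by apply/ffunP=> z; rewrite !gconjE !ffunE invMg !mulgA. Qed.

Lemma gconj0 g : gconj g (0 : {ffun gT -> k}) = 0.
Proof. by apply/ffunP=> z; rewrite gconjE !ffunE. Qed.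

Lemma gconj_gscale g (d : k) a : gconj g (gscale d a) = gscale d (gconj g a).
Proof. by apply/ffunP=> z; rewrite !gconjE !ffunE. Qed.

Lemma gconj_gmul g a c : gconj g (gmul a c) = gmul (gconj g a) (gconj g c).
Proof.
apply/ffunP=> z; rewrite !gconjE !ffunE (reindex_inj (conjg_inj g)) /=.
apply: eq_bigr => x _; rewrite !ffunE /conjg; congr (a _ * c _).
  by rewrite mulgA.
by rewrite !invMg !invgK !mulgA mulgK.
Qed.

Lemma gconj_gel g e : gconj g (gel e : {ffun gT -> k}) = gel (g * e * g^-1)%g.
Proof.
apply/ffunP=> z; rewrite gconjE !ffunE; congr ((_ : bool)%:R).
apply/eqP/eqP=> [<-|->]; first by rewrite !mulgA mulgV mul1g mulgK.
by rewrite !mulgA mulVg mul1g mulgKV.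
Qed.

Lemma gmul_gscale (d d' : k) a c :
  gmul (gscale d a) (gscale d' c) = gscale (d * d') (gmul a c).
Proof.
apply/ffunP=> z; rewrite !ffunE mulr_sumr; apply: eq_bigr => x _.
by rewrite !ffunE mulrACA.
Qed.

Lemma gconj_prod_fixed a (t : seq gT) :
  {in t, forall h, gconj h a = a} -> gconj (\prod_(h <- t) h)%g a = a.
Proof.
elim: t => [|h t IH] fix_t; first by rewrite big_nil gconj1.
rewrite big_cons gconjM IH ?fix_t ?mem_head // => h' t_h'.
by apply: fix_t; rewrite inE t_h' orbT.
Qed.

Lemma srcalg0 i : (0 : {ffun gT -> k}) \in srcalg i.
Proof.
rewrite inE; apply/eqP/ffunP=> z; rewrite !ffunE big1 // => x _.
by rewrite !ffunE big1 ?mul0r // => x' _; rewrite ffunE mulr0.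
Qed.

Lemma gel_dcspan (P : {group gT}) (Y : {set gT}) u v x :
  u \in P -> v \in P -> x \in Y ->
  (gel (u * x * v^-1)%g : {ffun gT -> k}) \in dcspan P Y.
Proof.
move=> uP vP xY; rewrite inE; apply/forallP=> g; apply/implyP.
rewrite ffunE; case: (g =P _) => [-> _|]; last by rewrite eqxx.
apply/existsP; exists x; rewrite xY /= mem_mulg ?groupV //.
by rewrite mem_rcoset mulgK.
Qed.

Lemma gconj_srcalg i g a :
  gconj g i = i -> a \in srcalg i -> gconj g a \in srcalg i.
Proof.
move=> gi /eqP a_def; apply/eqP.
by rewrite -[in RHS]a_def !gconj_gmul gi.
Qed.

(* The diagonal element (h, h) of P x P acts on ikGi by conjugation. *)
Lemma gconj_sinv_gel (P : {group gT}) (Y : {set gT}) (b i : {ffun gT -> k})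
    (s sinv : {ffun gT -> k} -> {ffun gT -> k}) e h :
  source_idem b P i -> source_iso P Y i s sinv ->
  (gel e : {ffun gT -> k}) \in dcspan P Y -> h \in P -> (h * e * h^-1 = e)%g ->
  gconj h (sinv (gel e)) = sinv (gel e).
Proof.
move=> [_ [fixi _ _ _] _ _] [_ _ sinv_src [s_can sinv_can] s_equiv] eY hP he.
set a := sinv (gel e).
have aS : a \in srcalg i := sinv_src _ eY.
have cS := gconj_srcalg (fixi h hP) aS.
have E : s (gconj h a) = s a.
  by rewrite [LHS]s_equiv // -/(gconj h _) sinv_can // gconj_gel he.
by rewrite -(s_can _ cS) E s_can.
Qed.

Lemma cupA_theta_star (sinv : {ffun gT -> k} -> {ffun gT -> k})
    u v x u' v' y m (f g : seq gT -> k) (t : seq gT) :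
  {in take m t, forall h, gconj h (sinv (gel (u' * y * v'^-1)%g))
                          = sinv (gel (u' * y * v'^-1)%g)} ->
  cupA m (theta_star sinv u v x f) (theta_star sinv u' v' y g) t
  = gscale (cupk m f g t) (gmul (sinv (gel (u * x * v^-1)%g))
                         (sinv (gel (u' * y * v'^-1)%g))).
Proof.
move=> fixt; rewrite /cupA /theta_star gconj_gscale.
by rewrite (gconj_prod_fixed fixt) gmul_gscale.
Qed.

End GroupAlgebra.

Lemma Quvx_conj_fixed (gT : finGroupType) (P : {set gT}) u v x h :
  h \in Quvx P u v x -> h \in P /\ (h * (u * x * v^-1) * h^-1 = u * x * v^-1)%g.
Proof.
rewrite inE => /andP[hP /existsP[c /andP[_ /andP[/eqP hu /eqP hv]]]].
split=> //; rewrite {1}hu hv conjgE !invMg !invgK !mulgA.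
by rewrite !mulgKV !mulgK.
Qed.

Lemma eq_cohomologous (gT : finGroupType) (M : zmodType) (act : gT -> M -> M)
    (Msub : pred M) (W : {set gT}) n (f g : seq gT -> M) :
  (forall h, act h 0 = 0) -> 0 \in Msub ->
  (forall t, inW W n t -> f t = g t) -> cohomologous act Msub W n f g.
Proof.
move=> act0 Msub0 eq_fg; case: n eq_fg => [|n] eq_fg //.
exists (fun=> 0) => // t Wt; rewrite eq_fg // subrr /cobound act0 add0r.
rewrite big1 => [|j _]; first by case: odd; rewrite /sgnz ?oppr0 addr0.
by case: odd; rewrite /sgnz ?oppr0.
Qed.

Theorem lemma4p8 (gT : finGroupType) (k : closedFieldType) (p : nat)
    (hp : p \in [pchar k])
    (b : galg gT k) (P : {group gT}) (i : galg gT k)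
    (hb : block_idem b) (hi : source_idem b P i)
    (Y : {set gT}) (hY : dc_distinct P Y)
    (s sinv : galg gT k -> galg gT k) (hs : source_iso P Y i s sinv)
    (R : gT -> {set gT * gT}) (hR : forall x, x \in Y -> dc_reps P x (R x))
    (x y : gT) (hx : x \in Y) (hy : y \in Y)
    (ux vx uy vy : gT) (huvx : (ux, vx) \in R x) (huvy : (uy, vy) \in R y)
    (w : gT) (hw : w \in P)
    (Z : {set gT}) (A : gT -> {set gT * gT}) (alpha : gT -> gT * gT -> k)
    (hZ : Z \subset Y) (hA : forall z, z \in Z -> A z \subset setX P P)
    (hdec : gmul (sinv (gel (ux * x * vx^-1)%g))
                 (sinv (gel (w * uy * y * vy^-1 * w^-1)%g))
            = \sum_(z in Z) \sum_(r in A z)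
                 gscale (alpha z r) (sinv (gel (r.1 * z * r.2^-1)%g))) :
  let W' := Quvx P ux vx x :&: Quvx P (w * uy)%g (w * vy)%g y in
  forall (m n : nat) (f g : seq gT -> k),
    cocycle (@triv_act gT k) W' m f -> cocycle (@triv_act gT k) W' n g ->
    cohomologous (@conj_act gT k) (srcalg i) W' (m + n)
      (cupA m (theta_star sinv ux vx x f)
              (theta_star sinv (w * uy)%g (w * vy)%g y g))
      (fun t => \sum_(z in Z) \sum_(r in A z)
                 gscale (alpha z r) (theta_star sinv r.1 r.2 z (cupk m f g) t)).
Proof.
move=> W' m n f g _ _.
have ey : (w * uy * y * (w * vy)^-1 = w * uy * y * vy^-1 * w^-1)%g.
  by rewrite invMg !mulgA.
have [uyP vyP] : uy \in P /\ vy \in P.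
  by have [/subsetP/(_ _ huvy)] := hR y hy; rewrite in_setX => /andP[].
have fixW' h : h \in W' -> gconj h (sinv (gel (w * uy * y * (w * vy)^-1)%g))
                           = sinv (gel (w * uy * y * (w * vy)^-1)%g).
  rewrite inE => /andP[_ /Quvx_conj_fixed[hP hfix]].
  have ey_span := gel_dcspan k (groupM hw uyP) (groupM hw vyP) hy.
  exact: gconj_sinv_gel hi hs ey_span hP hfix.
apply: eq_cohomologous => [h||t [_ /allP tW]]; first exact: gconj0.
  exact: srcalg0.
rewrite cupA_theta_star => [|h /mem_take/tW]; last exact: fixW'.
rewrite ey hdec gscale_sumr; apply: eq_bigr => z _.
rewrite gscale_sumr; apply: eq_bigr => r _.
by rewrite /theta_star /cupk !gscaleA mulrC.
Qed.
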